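(* Let $A$ and $B$ be input types of system $\mathcal F$ not containing the type constant $O$. Then $A\wedge B$, $A\vee B$ and $LA$ are input types.
   Context: $\lambda$-terms are those of the untyped $\lambda$-calculus; normal means without $\beta$-redex. Types of system $\mathcal F$: built from type variables and type constants (atomic, not quantifiable; $O$ is one) with $\rightarrow$, $\forall$; only proper types (in every $\forall XA$, $X$ occurs free in $A$). Typing: (ax) $\Gamma \vdash x_i : A_i$ for $x_i:A_i\in\Gamma$; ($\rightarrow_i$) from $\Gamma, x:B \vdash t : C$ infer $\Gamma \vdash \lambda x t : B \rightarrow C$; ($\rightarrow_e$) from $\Gamma \vdash u : B\rightarrow C$, $\Gamma \vdash v : B$ infer $\Gamma \vdash (u)v : C$; ($\forall_i$) from $\Gamma \vdash t : A$, $X$ not free in $\Gamma$, infer $\Gamma \vdash t : \forall X A$; ($\forall_e$) from $\Gamma \vdash t : \forall X A$ infer $\Gamma \vdash t : A[C/X]$. $\mathcal F_0$ is $\mathcal F$ without ($\forall_e$). An input type is a closed type $E$ such that for every normal $t$, $\vdash_{\mathcal F} t:E$ implies $\vdash_{\mathcal F_0} t:E$. With $X$ a type variable not free in $A,B$: $A\wedge B=\forall X\{(A\rightarrow(B\rightarrow X))\rightarrow X\}$, $A\vee B=\forall X\{(A\rightarrow X)\rightarrow((B\rightarrow X)\rightarrow X)\}$, $LA=\forall X\{X\rightarrow[(A\rightarrow(X\rightarrow X))\rightarrow X]\}$. *)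

From Stdlib Require Import Arith List.
Import ListNotations.

(** Types: type variables (de Bruijn), type constants (atomic, not
    quantifiable), arrow, forall (binds index 0). *)
Inductive ty : Type :=
  | TVar : nat -> ty
  | TConst : nat -> ty
  | TArr : ty -> ty -> ty
  | TAll : ty -> ty.

Definition O : ty := TConst 0.

Fixpoint lift (k c : nat) (A : ty) : ty :=
  match A with
  | TVar n => if n <? c then TVar n else TVar (n + k)
  | TConst a => TConst a
  | TArr A1 A2 => TArr (lift k c A1) (lift k c A2)
  | TAll A1 => TAll (lift k (S c) A1)
  end.

Fixpoint subst (j : nat) (C : ty) (A : ty) : ty :=
  match A with
  | TVar n => if n =? j then lift j 0 C
              else if n <? j then TVar n else TVar (pred n)
  | TConst a => TConst a
  | TArr A1 A2 => TArr (subst j C A1) (subst j C A2)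
  | TAll A1 => TAll (subst (S j) C A1)
  end.

(** A[C/X] where X is the variable bound by the outer forall *)
Definition inst (A C : ty) : ty := subst 0 C A.

Fixpoint occurs (n : nat) (A : ty) : bool :=
  match A with
  | TVar m => m =? n
  | TConst _ => false
  | TArr A1 A2 => occurs n A1 || occurs n A2
  | TAll A1 => occurs (S n) A1
  end.

Fixpoint proper (A : ty) : Prop :=
  match A with
  | TVar _ | TConst _ => True
  | TArr A1 A2 => proper A1 /\ proper A2
  | TAll A1 => proper A1 /\ occurs 0 A1 = true
  end.

Fixpoint closed_at (k : nat) (A : ty) : Prop :=
  match A with
  | TVar n => n < k
  | TConst _ => True
  | TArr A1 A2 => closed_at k A1 /\ closed_at k A2
  | TAll A1 => closed_at (S k) A1
  end.

Definition closed_ty (A : ty) : Prop := closed_at 0 A.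

Fixpoint contains_const (c : nat) (A : ty) : bool :=
  match A with
  | TVar _ => false
  | TConst a => a =? c
  | TArr A1 A2 => contains_const c A1 || contains_const c A2
  | TAll A1 => contains_const c A1
  end.

Definition contains_O (A : ty) : bool := contains_const 0 A.

Inductive term : Type :=
  | Var : nat -> term
  | Lam : term -> term
  | App : term -> term -> term.

Fixpoint normal (t : term) : Prop :=
  match t with
  | Var _ => True
  | Lam u => normal u
  | App (Lam _) _ => False
  | App u v => normal u /\ normal v
  end.

(** Typing of system F (elim = true) and F0 (elim = false: no forall-elim).
    Only proper types are used: the new types introduced by the rules
    (B in ->_i, C in forall_e, forall X A in forall_i) are required proper.
    forall_i: "X not free in Gamma" is rendered in de Bruijn style by
    shifting the context. *)
Inductive typing (elim : bool) : list ty -> term -> ty -> Prop :=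
  | T_ax : forall G n A, nth_error G n = Some A -> typing elim G (Var n) A
  | T_arr_i : forall G B C t,
      proper B -> typing elim (B :: G) t C -> typing elim G (Lam t) (TArr B C)
  | T_arr_e : forall G u v B C,
      typing elim G u (TArr B C) -> typing elim G v B -> typing elim G (App u v) C
  | T_all_i : forall G t A,
      occurs 0 A = true ->
      typing elim (map (lift 1 0) G) t A -> typing elim G t (TAll A)
  | T_all_e : forall G t A C,
      elim = true -> proper C ->
      typing elim G t (TAll A) -> typing elim G t (inst A C).

Definition typF (G : list ty) (t : term) (A : ty) : Prop := typing true G t A.
Definition typF0 (G : list ty) (t : term) (A : ty) : Prop := typing false G t A.

Definition input_type (E : ty) : Prop :=
  closed_ty E /\ proper E /\
  forall t : term, normal t -> typF [] t E -> typF0 [] t E.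

(** A /\ B = forall X ((A -> (B -> X)) -> X), X fresh (index 0, A,B shifted) *)
Definition tand (A B : ty) : ty :=
  TAll (TArr (TArr (lift 1 0 A) (TArr (lift 1 0 B) (TVar 0))) (TVar 0)).

(** A \/ B = forall X ((A -> X) -> ((B -> X) -> X)) *)
Definition tor (A B : ty) : ty :=
  TAll (TArr (TArr (lift 1 0 A) (TVar 0))
             (TArr (TArr (lift 1 0 B) (TVar 0)) (TVar 0))).

(** L A = forall X (X -> ((A -> (X -> X)) -> X)) *)
Definition tlist (A : ty) : ty :=
  TAll (TArr (TVar 0) (TArr (TArr (lift 1 0 A) (TArr (TVar 0) (TVar 0))) (TVar 0))).

(* Instantiating the quantifier of A /\ B, A \/ B or L A at O gives a type whose
   hypotheses all have the form P1 -> ... -> Pn -> O, each Pi being O or an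
   O-free input type.  A normal inhabitant of such a type is a stack of
   abstractions over applications of hypotheses, so it retypes in F0 with O read
   as the quantified variable, provided every argument u of an O-free input type
   A is F0-typable.  For such u, replace O by D := (forall X, X -> X) ->
   (forall X, X -> X) and each maximal application of a free variable by
   \...\. (\x. x x): the result is a closed normal F-inhabitant of A, hence is
   F0-typable.  Since \x. x x is not F0-typable, u has no free variable, so u
   itself is a closed F-inhabitant of the input type A. *)

From Stdlib Require Import Arith List Lia Bool.
Import ListNotations.

Ltac case_nat :=
  repeat (match goal with
          | |- context [?a <? ?b] => destruct (Nat.ltb_spec a b)
          | |- context [?a =? ?b] => destruct (Nat.eqb_spec a b)
          end; simpl).

Lemma lift_0 A c : lift 0 c A = A.
Proof. revert c; induction A; intros; simpl; case_nat; f_equal; auto; lia. Qed.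

Lemma lift_lift A k k' c c' : c' <= c <= c' + k' ->
  lift k c (lift k' c' A) = lift (k + k') c' A.
Proof.
  revert k k' c c'; induction A; intros k k' c c' H; simpl; case_nat;
    f_equal; auto; try lia; apply IHA; lia.
Qed.

Lemma subst_lift A Y k d c : d <= c <= d + k ->
  subst c Y (lift (S k) d A) = lift k d A.
Proof.
  revert k d c; induction A; intros k d c H; simpl; case_nat;
    f_equal; auto; try lia; apply IHA; lia.
Qed.

Lemma subst_lift1 A Y c : subst c Y (lift 1 c A) = A.
Proof. rewrite subst_lift by lia. apply lift_0. Qed.

Lemma subst_lift_comm X C c j d : d <= j ->
  subst (c + j) C (lift c d X) = lift c d (subst j C X).
Proof.
  revert j d; induction X as [n|a|X1 IH1 X2 IH2|X1 IH]; intros j d H; simpl.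
  - case_nat; try (f_equal; lia). subst. rewrite lift_lift by lia. f_equal; lia.
  - reflexivity.
  - f_equal; auto.
  - f_equal. replace (S (c + j)) with (c + S j) by lia. apply IH; lia.
Qed.

Lemma subst_subst A C C' c j :
  subst (c + j) C (subst c C' A) = subst c (subst j C C') (subst (S (c + j)) C A).
Proof.
  revert c; induction A as [n|a|A1 IH1 A2 IH2|A1 IH]; intros c; simpl.
  - case_nat; try (f_equal; lia).
    + apply subst_lift_comm; lia.
    + rewrite subst_lift by lia. reflexivity.
  - reflexivity.
  - f_equal; auto.
  - f_equal. apply (IH (S c)).
Qed.

Lemma subst_inst A C C' j :
  subst j C (inst A C') = inst (subst (S j) C A) (subst j C C').
Proof. exact (subst_subst A C C' 0 j). Qed.

Lemma lift_subst X C c j : c <= j ->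
  lift 1 c (subst j C X) = subst (S j) C (lift 1 c X).
Proof.
  revert c j; induction X as [n|a|X1 IH1 X2 IH2|X1 IH]; intros c j H; simpl.
  - case_nat; try (f_equal; lia). subst. rewrite lift_lift by lia. reflexivity.
  - reflexivity.
  - f_equal; auto.
  - f_equal. apply IH; lia.
Qed.

Lemma closed_at_mono A c c' : closed_at c A -> c <= c' -> closed_at c' A.
Proof.
  revert c c'; induction A; simpl; intros c c' H Hc; try tauto; try lia.
  - destruct H; split; eauto.
  - apply (IHA (S c)); auto; lia.
Qed.

Lemma closed_at_lift A k c m : closed_at k A -> closed_at (k + m) (lift m c A).
Proof.
  revert k c; induction A; simpl; intros k c H; case_nat; try tauto; try lia.
  - destruct H; split; auto.
  - apply (IHA (S k)); auto.
Qed.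

Lemma lift_closed A k c : closed_at c A -> lift k c A = A.
Proof.
  revert c; induction A; simpl; intros c H; case_nat; f_equal; try lia; try tauto.
  - apply (IHA1 c); tauto.
  - apply (IHA2 c); tauto.
  - apply IHA; auto.
Qed.

Lemma subst_closed A C c j : closed_at c A -> c <= j -> subst j C A = A.
Proof.
  revert c j; induction A; simpl; intros c j H Hc; case_nat; f_equal; try lia; try tauto.
  - apply (IHA1 c); tauto.
  - apply (IHA2 c); tauto.
  - apply (IHA (S c)); auto; lia.
Qed.

Lemma occurs_closed A c m : closed_at c A -> c <= m -> occurs m A = false.
Proof.
  revert c m; induction A; simpl; intros c m H Hc; case_nat; auto; try lia.
  - destruct H. rewrite (IHA1 c), (IHA2 c); auto.
  - apply (IHA (S c)); auto; lia.
Qed.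

Lemma occurs_lift A k m c : occurs m A = true -> m < c -> occurs m (lift k c A) = true.
Proof.
  revert m c; induction A; simpl; intros m c H Hc; case_nat; auto; try lia.
  - apply Nat.eqb_eq in H; lia.
  - apply orb_true_iff in H; apply orb_true_iff; destruct H; auto.
  - apply IHA; auto; lia.
Qed.

Lemma occurs_subst A C m j : occurs m A = true -> m < j -> occurs m (subst j C A) = true.
Proof.
  revert m j; induction A; simpl; intros m j H Hj; case_nat; auto; try lia;
    try (apply Nat.eqb_eq in H; lia).
  - apply orb_true_iff in H; apply orb_true_iff; destruct H; auto.
  - apply IHA; auto; lia.
Qed.

Lemma proper_lift A k c : proper A -> proper (lift k c A).
Proof.
  revert c; induction A; simpl; intros c H; case_nat; auto.
  - destruct H; split; auto.
  - destruct H; split; auto. apply occurs_lift; auto; lia.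
Qed.

Lemma proper_subst A C j : proper A -> proper C -> proper (subst j C A).
Proof.
  revert j; induction A; simpl; intros j H HC; case_nat; auto using proper_lift.
  - destruct H; split; auto.
  - destruct H; split; auto. apply occurs_subst; auto; lia.
Qed.

Lemma typing_subst e G t T : typing e G t T ->
  forall j C, proper C -> typing e (map (subst j C) G) t (subst j C T).
Proof.
  induction 1; intros j D HD; simpl.
  - apply T_ax. rewrite nth_error_map, H. reflexivity.
  - apply T_arr_i; [apply proper_subst; auto | apply (IHtyping j D HD)].
  - eapply T_arr_e; eauto.
  - apply T_all_i; [apply occurs_subst; auto; lia|].
    rewrite map_map. erewrite map_ext; [|intros; apply lift_subst; lia].
    rewrite <- map_map. apply IHtyping; auto.
  - rewrite subst_inst.
    apply T_all_e; auto using proper_subst.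
Qed.

Lemma map_subst_lift G C : map (subst 0 C) (map (lift 1 0) G) = G.
Proof.
  rewrite map_map, <- map_id. apply map_ext. intros. apply subst_lift1.
Qed.

Fixpoint inst_all (T : ty) (Cs : list ty) : option ty :=
  match Cs with
  | [] => Some T
  | C :: Cs' => match T with TAll A => inst_all (inst A C) Cs' | _ => None end
  end.

Lemma inst_all_subst Ds X j C U :
  inst_all (subst j C X) (map (subst j C) Ds) = Some U ->
  (exists U', inst_all X Ds = Some U' /\ U = subst j C U') \/
  (exists Ds1 Ds2 n, Ds = Ds1 ++ Ds2 /\ inst_all X Ds1 = Some (TVar n)).
Proof.
  revert X; induction Ds as [|D Ds IH]; intros X H; simpl in *.
  - left. exists X. injection H as <-. auto.
  - destruct X as [n|a|X1 X2|X1]; simpl in H; try discriminate.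
    + right. exists [], (D :: Ds), n. auto.
    + rewrite <- subst_inst in H.
      destruct (IH _ H) as [[U' [H1 H2]]|[Ds1 [Ds2 [n [-> Hn]]]]].
      * left. exists U'. auto.
      * right. exists (D :: Ds1), Ds2, n. auto.
Qed.

Definition lam_shape (G : list ty) (w : term) (U : ty) : Prop :=
  match U with
  | TArr D E => typing true (D :: G) w E
  | TAll _ => True
  | _ => False
  end.

(* Generalised over instantiations because [T_all_e] can undo [T_all_i] steps
   performed after the [T_arr_i] that typed the abstraction. *)
Lemma lam_typing_instances G t T : typing true G t T ->
  forall w, t = Lam w -> forall Cs U, Forall proper Cs ->
  inst_all T Cs = Some U -> lam_shape G w U.
Proof.
  induction 1; intros w0 Ht Cs U HCs HU; try discriminate.
  - injection Ht as <-. destruct Cs; injection HU as <- || discriminate. exact H0.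
  - subst t. destruct Cs as [|C1 Cs]; [injection HU as <-; exact I|].
    apply Forall_cons_iff in HCs as [HC1 HCs'].
    rewrite <- (map_subst_lift Cs C1) in HU.
    assert (HCs'' : Forall proper (map (lift 1 0) Cs)).
    { apply Forall_map. eapply Forall_impl; [|exact HCs']. intros; apply proper_lift; auto. }
    apply inst_all_subst in HU as [[U' [HU' ->]]|[Ds1 [Ds2 [n [HDs Hn]]]]].
    + specialize (IHtyping w0 eq_refl _ _ HCs'' HU').
      destruct U'; simpl in *; try contradiction; auto.
      rewrite <- (map_subst_lift G C1). exact (typing_subst _ _ _ _ IHtyping 0 C1 HC1).
    + rewrite HDs in HCs''. apply Forall_app in HCs'' as [HDs1 _].
      destruct (IHtyping w0 eq_refl _ _ HDs1 Hn).
  - apply (IHtyping w0 Ht (C :: Cs)); auto.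
Qed.

Lemma lam_typing_inv G w T : typing true G (Lam w) T -> lam_shape G w T.
Proof. intros H. exact (lam_typing_instances _ _ _ H w eq_refl [] T (Forall_nil _) eq_refl). Qed.

Fixpoint fv (n : nat) (t : term) : bool :=
  match t with
  | Var m => m =? n
  | Lam w => fv (S n) w
  | App u v => fv n u || fv n v
  end.

Definition closed_term (t : term) : Prop := forall n, fv n t = false.

Lemma typing_ctx e G t T G' : typing e G t T ->
  (forall n, fv n t = true -> nth_error G n = nth_error G' n) -> typing e G' t T.
Proof.
  intros H; revert G'; induction H; intros G' HG; simpl in *.
  - apply T_ax. rewrite <- HG; auto. apply Nat.eqb_refl.
  - apply T_arr_i; auto. apply IHtyping. intros [|n] Hn; simpl; auto.
  - eapply T_arr_e; [apply IHtyping1 | apply IHtyping2];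
      intros n Hn; apply HG; rewrite Hn; auto using orb_true_r.
  - apply T_all_i; auto. apply IHtyping. intros n Hn. rewrite !nth_error_map, HG; auto.
  - apply T_all_e; auto.
Qed.

Lemma typing_closed_term e G t T G' :
  closed_term t -> typing e G t T -> typing e G' t T.
Proof. intros Ht H. apply (typing_ctx _ _ _ _ _ H). intros n Hn. congruence. Qed.

Lemma typing_fv e G t T n : typing e G t T -> fv n t = true -> n < length G.
Proof.
  intros H; revert n; induction H; intros k Hk; simpl in *.
  - apply Nat.eqb_eq in Hk as <-. apply nth_error_Some. congruence.
  - specialize (IHtyping (S k) Hk). simpl in IHtyping. lia.
  - apply orb_true_iff in Hk as [Hk|Hk]; eauto.
  - rewrite <- (length_map (lift 1 0) G). auto.
  - auto.
Qed.

Lemma typing_fv_type e G t T n : typing e G t T -> fv n t = true ->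
  exists U, nth_error G n = Some U.
Proof.
  intros H Hn. apply (typing_fv _ _ _ _ _ H), nth_error_Some in Hn.
  destruct (nth_error G n); eauto. congruence.
Qed.

Inductive subterm (s : term) : term -> Prop :=
  | subterm_refl : subterm s s
  | subterm_lam w : subterm s w -> subterm s (Lam w)
  | subterm_appl u v : subterm s u -> subterm s (App u v)
  | subterm_appr u v : subterm s v -> subterm s (App u v).

Lemma typing_subterm e G t T s : typing e G t T -> subterm s t ->
  exists G' T', typing e G' s T'.
Proof.
  induction 1; intros Hs; inversion Hs; subst; eauto.
  - exists G, A. apply T_ax; auto.
  - exists G, (TArr B C). apply T_arr_i; auto.
  - exists G, C. eapply T_arr_e; eauto.
Qed.

Fixpoint headvar (t : term) : option nat :=
  match t with
  | Var n => Some n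
  | Lam _ => None
  | App u _ => headvar u
  end.

Fixpoint nargs (t : term) : nat :=
  match t with App u _ => S (nargs u) | _ => 0 end.

Lemma headvar_fv t n : headvar t = Some n -> fv n t = true.
Proof.
  induction t; simpl; intros H; try discriminate.
  - injection H as ->. apply Nat.eqb_refl.
  - rewrite IHt1; auto.
Qed.

Lemma normal_app_inv u v : normal (App u v) -> normal u /\ normal v.
Proof. destruct u; simpl; tauto. Qed.

Lemma normal_cases t : normal t -> (exists w, t = Lam w) \/ (exists n, headvar t = Some n).
Proof.
  induction t as [n|w _|u IHu v _]; intros Ht; [right; exists n; auto | left; eauto |].
  right. destruct u; simpl in *; try contradiction; destruct Ht as [Hu _];
    destruct (IHu Hu) as [[w Hw]|[m Hm]]; eauto; discriminate.
Qed.

Lemma Forall_nth_error (P : ty -> Prop) G n U :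
  Forall P G -> nth_error G n = Some U -> P U.
Proof. intros HG HU. eapply Forall_forall; [exact HG | eapply nth_error_In; eauto]. Qed.

Lemma map_lift_closed G : Forall closed_ty G -> map (lift 1 0) G = G.
Proof.
  induction 1; simpl; auto. rewrite IHForall, lift_closed; auto.
Qed.

Lemma typing_app_inv e G u v T : Forall closed_ty G -> typing e G (App u v) T ->
  exists B C, typing e G u (TArr B C) /\ typing e G v B.
Proof.
  intros HG H. remember (App u v) as t eqn:Et. induction H; try discriminate.
  - injection Et as -> ->. eauto.
  - rewrite (map_lift_closed G HG) in *. auto.
  - auto.
Qed.

Definition closed_proper (A : ty) : Prop := closed_ty A /\ proper A.

Inductive ends_in_O (P : ty -> Prop) : ty -> Prop :=
  | ends_O : ends_in_O P O
  | ends_arr A U : P A -> ends_in_O P U -> ends_in_O P (TArr A U).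

Definition returns_O : ty -> Prop := ends_in_O closed_proper.

Lemma ends_in_O_mono (P Q : ty -> Prop) U :
  (forall A, P A -> Q A) -> ends_in_O P U -> ends_in_O Q U.
Proof. intros HPQ; induction 1; constructor; auto. Qed.

Lemma ends_in_O_closed_proper P U :
  (forall A, P A -> closed_proper A) -> ends_in_O P U -> closed_proper U.
Proof.
  unfold closed_proper, closed_ty.
  intros HP; induction 1 as [|A V HA _ [HcV HpV]]; [simpl; auto|].
  destruct (HP A HA) as [HcA HpA]. simpl; auto.
Qed.

Lemma returns_O_closed U : returns_O U -> closed_ty U.
Proof. intros H. apply (ends_in_O_closed_proper _ _ (fun A H => H) H). Qed.

Lemma ends_in_O_contains_O P U : ends_in_O P U -> contains_O U = true.
Proof.
  unfold contains_O; induction 1; simpl; [reflexivity|].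
  rewrite IHends_in_O. apply orb_true_r.
Qed.

Definition cod (U : ty) : ty := match U with TArr _ Q => Q | _ => U end.

Lemma ends_in_O_iter_cod P U k : ends_in_O P U -> ends_in_O P (Nat.iter k cod U).
Proof.
  intros H. induction k as [|k IH]; simpl; auto.
  destruct IH; simpl; auto. constructor.
Qed.

Lemma spine_type e G t T n U : typing e G t T ->
  headvar t = Some n -> nth_error G n = Some U -> returns_O U ->
  T = Nat.iter (nargs t) cod U.
Proof.
  intros H; revert n U; induction H; intros k U Hh HU HUO; simpl in Hh; try discriminate.
  - injection Hh as <-. simpl. congruence.
  - simpl. rewrite <- (IHtyping1 k U); auto.
  - exfalso.
    assert (HU' : nth_error (map (lift 1 0) G) k = Some U).
    { rewrite nth_error_map, HU. simpl. rewrite lift_closed; auto.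
      apply returns_O_closed; auto. }
    rewrite (IHtyping k U Hh HU' HUO), (occurs_closed _ 0 0) in H; [discriminate| |lia].
    apply returns_O_closed, ends_in_O_iter_cod; auto.
  - exfalso. specialize (IHtyping k U Hh HU HUO).
    pose proof (ends_in_O_iter_cod _ _ (nargs t) HUO) as Hall.
    rewrite <- IHtyping in Hall. inversion Hall.
Qed.

Fixpoint subst_O (C A : ty) : ty :=
  match A with
  | TVar n => TVar n
  | TConst a => if a =? 0 then C else TConst a
  | TArr A1 A2 => TArr (subst_O C A1) (subst_O C A2)
  | TAll A1 => TAll (subst_O (lift 1 0 C) A1)
  end.

Lemma subst_O_free C A : contains_O A = false -> subst_O C A = A.
Proof.
  unfold contains_O; revert C; induction A; simpl; intros C H; auto.
  - rewrite H. reflexivity.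
  - apply orb_false_iff in H as [H1 H2]. f_equal; auto.
  - f_equal; auto.
Qed.

Lemma subst_O_id A : subst_O O A = A.
Proof.
  induction A; simpl; f_equal; auto. destruct (Nat.eqb_spec n 0); subst; reflexivity.
Qed.

Lemma subst_O_lift C A k c : closed_ty C ->
  subst_O C (lift k c A) = lift k c (subst_O C A).
Proof.
  intros HC; revert c; induction A; intros c; simpl; case_nat; auto.
  - symmetry. apply lift_closed, (closed_at_mono _ 0); auto; lia.
  - f_equal; auto.
  - rewrite (lift_closed C 1 0 HC). f_equal; auto.
Qed.

Lemma subst_O_subst C A D j : closed_ty C ->
  subst_O C (subst j D A) = subst j (subst_O C D) (subst_O C A).
Proof.
  intros HC; revert j; induction A; intros j; simpl; case_nat; auto;
    try (apply subst_O_lift; assumption).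
  - rewrite (subst_closed C _ 0); auto; lia.
  - f_equal; auto.
  - rewrite (lift_closed C 1 0 HC). f_equal. apply IHA.
Qed.

Lemma occurs_subst_O C A n : occurs n A = true -> occurs n (subst_O C A) = true.
Proof.
  revert C n; induction A; simpl; intros C m H; auto; try discriminate.
  apply orb_true_iff in H as [H|H]; [rewrite (IHA1 C m H) | rewrite (IHA2 C m H), orb_true_r];
    reflexivity.
Qed.

Lemma occurs_subst_O_var A n : contains_O A = true -> occurs n (subst_O (TVar n) A) = true.
Proof.
  unfold contains_O; revert n; induction A; simpl; intros m H; try discriminate.
  - rewrite H. apply Nat.eqb_refl.
  - apply orb_true_iff in H as [H|H]; [rewrite (IHA1 m H) | rewrite (IHA2 m H), orb_true_r];
      reflexivity.
  - case_nat; try lia. rewrite Nat.add_1_r. auto.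
Qed.

Lemma proper_subst_O C A : proper C -> proper A -> proper (subst_O C A).
Proof.
  revert C; induction A; simpl; intros C HC HA; auto.
  - destruct (n =? 0); simpl; auto.
  - destruct HA; auto.
  - destruct HA; split; auto using proper_lift, occurs_subst_O.
Qed.

Lemma closed_subst_O C A k : closed_at k C -> closed_at k A -> closed_at k (subst_O C A).
Proof.
  revert C k; induction A; simpl; intros C k HC HA; auto.
  - destruct (n =? 0); simpl; auto.
  - destruct HA; auto.
  - apply IHA; auto. rewrite <- Nat.add_1_r. apply closed_at_lift; auto.
Qed.

Lemma subst_subst_O_var A C j : closed_at j A ->
  subst j C (subst_O (TVar j) A) = subst_O (lift j 0 C) A.
Proof.
  revert C j; induction A; simpl; intros C j HA; case_nat; auto; try lia.
  - destruct HA; f_equal; auto.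
  - f_equal. case_nat; try lia. rewrite Nat.add_1_r, IHA, lift_lift by (auto; lia).
    reflexivity.
Qed.

Definition tid : ty := TAll (TArr (TVar 0) (TVar 0)).
Definition tdelta : ty := TArr tid tid.
Definition delta : term := Lam (App (Var 0) (Var 0)).

Lemma tdelta_closed : closed_ty tdelta.
Proof. cbn. lia. Qed.

Lemma delta_typing G : typing true G delta tdelta.
Proof.
  apply T_arr_i; [cbn; auto|].
  eapply T_arr_e; [|apply T_ax; reflexivity].
  change (TArr tid tid) with (inst (TArr (TVar 0) (TVar 0)) tid).
  apply T_all_e; [reflexivity | cbn; auto | apply T_ax; reflexivity].
Qed.

Fixpoint tsize (A : ty) : nat :=
  match A with
  | TArr A1 A2 => S (tsize A1 + tsize A2)
  | TAll A1 => S (tsize A1)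
  | _ => 1
  end.

Lemma tsize_lift A k c : tsize (lift k c A) = tsize A.
Proof. revert c; induction A; intros c; simpl; case_nat; auto. Qed.

Lemma typF0_var_tsize G n T U : typing false G (Var n) T ->
  nth_error G n = Some U -> tsize U <= tsize T.
Proof.
  intros H; remember (Var n) as t eqn:Et; revert U.
  induction H; intros U HU; try discriminate.
  - injection Et as ->. rewrite H in HU. injection HU as ->. lia.
  - assert (HU' : nth_error (map (lift 1 0) G) n = Some (lift 1 0 U)).
    { rewrite nth_error_map, HU. reflexivity. }
    specialize (IHtyping Et _ HU'). rewrite tsize_lift in IHtyping. simpl. lia.
Qed.

Lemma typF0_self_app G n T : ~ typing false G (App (Var n) (Var n)) T.
Proof.
  intros H; remember (App (Var n) (Var n)) as t eqn:Et.
  induction H; try discriminate; auto.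
  injection Et as -> ->.
  assert (Hx : nth_error G n = Some (TArr B C)) by (inversion H; congruence).
  pose proof (typF0_var_tsize _ _ _ _ H0 Hx). simpl in *. lia.
Qed.

Lemma delta_not_typF0 G T : ~ typing false G delta T.
Proof.
  intros H; remember delta as t eqn:Et.
  induction H; try discriminate; auto.
  injection Et as ->. exact (typF0_self_app _ _ _ H0).
Qed.

Fixpoint filler (U : ty) : term :=
  match U with TArr _ Q => Lam (filler Q) | _ => delta end.

Lemma filler_normal U : normal (filler U).
Proof. induction U; simpl; auto. Qed.

Lemma filler_closed U : closed_term (filler U).
Proof. induction U; intros m; simpl; auto. Qed.

Lemma filler_subterm U : subterm delta (filler U).
Proof. induction U; simpl; constructor; auto. Qed.

Lemma filler_typing G U : returns_O U -> typing true G (filler U) (subst_O tdelta U).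
Proof.
  intros HU; revert G; induction HU as [|A U [_ HA] _ IH]; intros G.
  - apply delta_typing.
  - apply T_arr_i; auto. apply proper_subst_O; auto. cbn; auto.
Qed.

Definition bshift (b : nat -> option ty) (n : nat) : option ty :=
  match n with 0 => None | S m => b m end.

Definition head_type (b : nat -> option ty) (t : term) : option ty :=
  match headvar t with
  | Some n => option_map (Nat.iter (nargs t) cod) (b n)
  | None => None
  end.

(* Replaces every maximal application [x c1 ... ck] with [x] in the domain of
   [b] by the filler of its type; working on maximal applications keeps the
   result normal. *)
Fixpoint fill (b : nat -> option ty) (t : term) : term :=
  match head_type b t with
  | Some U => filler U
  | None =>
      match t with
      | Var n => Var n
      | Lam w => Lam (fill (bshift b) w)
      | App u v => App (fill b u) (fill b v)
      end
  end.

Lemma fill_head b t U : head_type b t = Some U -> fill b t = filler U.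
Proof. intros H. destruct t; cbn [fill]; rewrite H; reflexivity. Qed.

Lemma fill_var b n : head_type b (Var n) = None -> fill b (Var n) = Var n.
Proof. intros H. cbn [fill]. rewrite H. reflexivity. Qed.

Lemma fill_app b u v : head_type b (App u v) = None ->
  fill b (App u v) = App (fill b u) (fill b v).
Proof. intros H. cbn [fill]. rewrite H. reflexivity. Qed.

Lemma head_type_var b n : head_type b (Var n) = b n.
Proof. unfold head_type; simpl. destruct (b n); reflexivity. Qed.

Lemma head_type_app b u v : head_type b (App u v) = None -> head_type b u = None.
Proof.
  unfold head_type; simpl. destruct (headvar u); auto. destruct (b n); auto. discriminate.
Qed.

Definition fillable (b : nat -> option ty) (G : list ty) : Prop :=
  forall n U, b n = Some U -> nth_error G n = Some U /\ returns_O U.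

Lemma fillable_bshift b G B : fillable b G -> fillable (bshift b) (B :: G).
Proof. intros Hb [|n] U HU; [discriminate | exact (Hb n U HU)]. Qed.

Lemma fillable_lift b G : fillable b G -> fillable b (map (lift 1 0) G).
Proof.
  intros Hb n U HU. destruct (Hb n U HU) as [HG HUO]. split; auto.
  rewrite nth_error_map, HG. simpl. rewrite lift_closed; auto. apply returns_O_closed; auto.
Qed.

Lemma head_type_typing b G t T U : fillable b G -> typing true G t T ->
  head_type b t = Some U -> T = U /\ returns_O U.
Proof.
  unfold head_type. intros Hb Ht Hh.
  destruct (headvar t) as [n|] eqn:Hn; [|discriminate].
  destruct (b n) as [V|] eqn:HV; [|discriminate]. injection Hh as <-.
  destruct (Hb n V HV) as [HG HVO].
  split; [exact (spine_type _ _ _ _ _ _ Ht Hn HG HVO) | apply ends_in_O_iter_cod; auto].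
Qed.

Lemma fill_typing G t T b : typing true G t T -> fillable b G ->
  typing true (map (subst_O tdelta) G) (fill b t) (subst_O tdelta T).
Proof.
  intros Ht; revert b; induction Ht as [G n A HA|G B C w HB Hw IH|G u v B C Hu IHu Hv IHv
    |G w A HA Hw IH|G w A C He HC Hw IH]; intros b Hb.
  - destruct (head_type b (Var n)) as [U|] eqn:Hh.
    + rewrite (fill_head _ _ _ Hh).
      destruct (head_type_typing _ _ _ _ _ Hb (T_ax _ _ _ _ HA) Hh) as [-> HU].
      apply filler_typing; auto.
    + rewrite (fill_var _ _ Hh). apply T_ax. rewrite nth_error_map, HA. reflexivity.
  - simpl. apply T_arr_i.
    + apply proper_subst_O; auto. cbn; auto.
    + apply (IH (bshift b)), fillable_bshift; auto.
  - destruct (head_type b (App u v)) as [U|] eqn:Hh.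
    + rewrite (fill_head _ _ _ Hh).
      destruct (head_type_typing _ _ _ _ _ Hb (T_arr_e _ _ _ _ _ _ Hu Hv) Hh) as [-> HU].
      apply filler_typing; auto.
    + rewrite (fill_app _ _ _ Hh). eapply T_arr_e; [apply (IHu b Hb) | apply (IHv b Hb)].
  - apply T_all_i; [apply occurs_subst_O; auto|].
    rewrite map_map. erewrite map_ext; [|intros; symmetry; apply subst_O_lift, tdelta_closed].
    rewrite <- map_map. apply IH, fillable_lift; auto.
  - unfold inst. rewrite subst_O_subst by apply tdelta_closed.
    apply T_all_e; auto. apply proper_subst_O; auto. cbn; auto.
Qed.

Lemma fill_normal b t : normal t -> normal (fill b t).
Proof.
  revert b; induction t as [n|w IH|u IHu v IHv]; intros b Ht.
  - destruct (head_type b (Var n)) eqn:Hh.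
    + rewrite (fill_head _ _ _ Hh). apply filler_normal.
    + rewrite (fill_var _ _ Hh). exact I.
  - simpl. apply IH; auto.
  - destruct (head_type b (App u v)) eqn:Hh.
    + rewrite (fill_head _ _ _ Hh). apply filler_normal.
    + rewrite (fill_app _ _ _ Hh).
      pose proof (normal_app_inv _ _ Ht) as [Hu Hv].
      specialize (IHu b Hu). specialize (IHv b Hv).
      apply head_type_app in Hh.
      destruct u as [m|w|u1 u2]; [rewrite (fill_var _ _ Hh) | contradiction
        | rewrite (fill_app _ _ _ Hh) in *]; simpl; auto.
Qed.

Lemma fill_fv b t n : fv n (fill b t) = true -> b n = None /\ fv n t = true.
Proof.
  revert b n; induction t as [m|w IH|u IHu v IHv]; intros b n H.
  - destruct (head_type b (Var m)) eqn:Hh.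
    + rewrite (fill_head _ _ _ Hh), filler_closed in H. discriminate.
    + rewrite (fill_var _ _ Hh) in H. rewrite head_type_var in Hh.
      simpl in H. apply Nat.eqb_eq in H as ->. simpl. rewrite Nat.eqb_refl. auto.
  - simpl in H. apply (IH (bshift b) (S n)) in H. auto.
  - destruct (head_type b (App u v)) eqn:Hh.
    + rewrite (fill_head _ _ _ Hh), filler_closed in H. discriminate.
    + rewrite (fill_app _ _ _ Hh) in H. simpl in *.
      apply orb_true_iff in H as [H|H]; [apply IHu in H | apply IHv in H];
        rewrite orb_true_iff; tauto.
Qed.

Lemma fill_subterm b t n U : b n = Some U -> fv n t = true -> subterm delta (fill b t).
Proof.
  revert b n; induction t as [m|w IH|u IHu v IHv]; intros b n Hb H.
  - simpl in H. apply Nat.eqb_eq in H as ->.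
    rewrite (fill_head b (Var n) U); [apply filler_subterm | rewrite head_type_var; auto].
  - simpl. constructor. apply (IH _ (S n) Hb H).
  - destruct (head_type b (App u v)) eqn:Hh.
    + rewrite (fill_head _ _ _ Hh). apply filler_subterm.
    + rewrite (fill_app _ _ _ Hh). simpl in H.
      apply orb_true_iff in H as [H|H]; [apply subterm_appl | apply subterm_appr]; eauto.
Qed.

Lemma input_arg_typF0 A G u G' : input_type A -> contains_O A = false ->
  Forall returns_O G -> normal u -> typing true G u A -> typing false G' u A.
Proof.
  intros [_ [_ HA]] HAO HG Hn Hu.
  set (b := nth_error G).
  assert (Hb : fillable b G).
  { intros n U HU. split; [exact HU | exact (Forall_nth_error _ _ _ _ HG HU)]. }
  assert (Hfill_closed : closed_term (fill b u)).
  { intros n. destruct (fv n (fill b u)) eqn:E; auto.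
    apply fill_fv in E as [Hbn Hun].
    destruct (typing_fv_type _ _ _ _ _ Hu Hun) as [U HU]. unfold b in Hbn. congruence. }
  assert (Hfill : typF0 [] (fill b u) A).
  { apply HA; [apply fill_normal; auto|].
    apply (typing_closed_term _ (map (subst_O tdelta) G)); auto.
    rewrite <- (subst_O_free tdelta A HAO). apply fill_typing; auto. }
  assert (Hu_closed : closed_term u).
  { intros n. destruct (fv n u) eqn:E; auto. exfalso.
    destruct (typing_fv_type _ _ _ _ _ Hu E) as [U HU].
    destruct (typing_subterm _ _ _ _ _ Hfill (fill_subterm _ _ _ _ HU E)) as [G0 [T0 H0]].
    exact (delta_not_typF0 _ _ H0). }
  apply (typing_closed_term _ []); auto.
  apply HA; auto. apply (typing_closed_term _ G); auto.
Qed.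

Definition arg_type (A : ty) : Prop := A = O \/ (input_type A /\ contains_O A = false).
Definition hyp_type : ty -> Prop := ends_in_O arg_type.
Definition top_type : ty -> Prop := ends_in_O hyp_type.

Lemma arg_type_closed_proper A : arg_type A -> closed_proper A.
Proof.
  intros [-> | [[Hc [Hp _]] _]]; split; auto. all: cbn; auto.
Qed.

Lemma hyp_type_closed_proper H : hyp_type H -> closed_proper H.
Proof. apply ends_in_O_closed_proper, arg_type_closed_proper. Qed.

Lemma hyp_type_returns_O H : hyp_type H -> returns_O H.
Proof. apply ends_in_O_mono, arg_type_closed_proper. Qed.

Lemma typing_lam_O G w : ~ typing true G (Lam w) O.
Proof. intros H. exact (lam_typing_inv _ _ _ H). Qed.

(* A neutral term in a context of hypothesis types only applies its head to
   arguments of type [O], handled recursively, or to O-free input types. *)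
Lemma neutral_typF0 X G t U n : Forall hyp_type G -> normal t -> headvar t = Some n ->
  typing true G t U -> typing false (map (subst_O X) G) t (subst_O X U).
Proof.
  intros HG; revert U n; induction t as [m|w _|u IHu v IHv]; intros U n Hn Hh Ht;
    try discriminate.
  - injection (Hh : Some m = Some n) as <-.
    destruct (typing_fv_type _ _ _ _ _ Ht (headvar_fv _ _ Hh)) as [V HV].
    pose proof (hyp_type_returns_O _ (Forall_nth_error _ _ _ _ HG HV)) as HVO.
    rewrite (spine_type _ _ _ _ _ _ Ht Hh HV HVO).
    apply T_ax. rewrite nth_error_map, HV. reflexivity.
  - simpl in Hh. destruct (normal_app_inv _ _ Hn) as [Hnu Hnv].
    destruct (typing_fv_type _ _ _ _ _ Ht (headvar_fv (App u v) _ Hh)) as [V HV].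
    pose proof (Forall_nth_error _ _ _ _ HG HV) as HVh.
    pose proof (hyp_type_returns_O _ HVh) as HVO.
    assert (HGc : Forall closed_ty G).
    { eapply Forall_impl; [|exact HG]. intros; apply hyp_type_closed_proper; auto. }
    destruct (typing_app_inv _ _ _ _ _ HGc Ht) as [B [C [Hu Hv]]].
    pose proof (spine_type _ _ _ _ _ _ Hu Hh HV HVO) as EBC.
    assert (EU : U = C).
    { rewrite (spine_type _ _ _ _ _ _ Ht Hh HV HVO). simpl. rewrite <- EBC. reflexivity. }
    assert (HB : arg_type B).
    { pose proof (ends_in_O_iter_cod _ _ (nargs u) HVh) as HBC.
      rewrite <- EBC in HBC. inversion HBC; auto. }
    subst U. eapply T_arr_e; [exact (IHu _ _ Hnu Hh Hu)|].
    destruct HB as [-> | [HBi HBO]].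
    + destruct (normal_cases v Hnv) as [[w ->] | [m Hm]].
      * exfalso. exact (typing_lam_O _ _ Hv).
      * exact (IHv _ _ Hnv Hm Hv).
    + rewrite subst_O_free by auto. apply (input_arg_typF0 _ G); auto.
      eapply Forall_impl; [|exact HG]. apply hyp_type_returns_O.
Qed.

Lemma top_typF0 X G T t : proper X -> Forall hyp_type G -> top_type T ->
  normal t -> typing true G t T -> typing false (map (subst_O X) G) t (subst_O X T).
Proof.
  intros HX HG HT; revert G t HG.
  induction HT as [|H T' HH _ IH]; intros G t HG Hn Ht;
    (destruct (normal_cases t Hn) as [[w ->] | [n Hh]];
     [| exact (neutral_typF0 _ _ _ _ _ HG Hn Hh Ht)]).
  - exfalso. exact (typing_lam_O _ _ Ht).
  - apply lam_typing_inv in Ht. simpl.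
    apply T_arr_i.
    + apply proper_subst_O; auto. apply hyp_type_closed_proper; auto.
    + apply (IH (H :: G)); auto.
Qed.

Lemma input_type_abstract_O T : top_type T -> input_type (TAll (subst_O (TVar 0) T)).
Proof.
  intros HT.
  pose proof (ends_in_O_closed_proper _ _ hyp_type_closed_proper HT) as [HTc HTp].
  assert (Hocc : occurs 0 (subst_O (TVar 0) T) = true).
  { apply occurs_subst_O_var. eapply ends_in_O_contains_O; eauto. }
  split; [|split].
  - apply closed_subst_O; [cbn; lia | apply (closed_at_mono _ 0); auto].
  - split; auto. apply proper_subst_O; cbn; auto.
  - intros t Hn Ht.
    assert (HtT : typF [] t T).
    { rewrite <- (subst_O_id T), <- (lift_0 O 0), <- subst_subst_O_var by auto.
      apply T_all_e; cbn; auto. }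
    apply T_all_i; auto.
    exact (top_typF0 (TVar 0) [] T t I (Forall_nil _) HT Hn HtT).
Qed.

Lemma tand_abstract_O A B : closed_ty A -> closed_ty B ->
  contains_O A = false -> contains_O B = false ->
  tand A B = TAll (subst_O (TVar 0) (TArr (TArr A (TArr B O)) O)).
Proof. intros. unfold tand. simpl. rewrite !subst_O_free, !lift_closed by auto. reflexivity. Qed.

Lemma tor_abstract_O A B : closed_ty A -> closed_ty B ->
  contains_O A = false -> contains_O B = false ->
  tor A B = TAll (subst_O (TVar 0) (TArr (TArr A O) (TArr (TArr B O) O))).
Proof. intros. unfold tor. simpl. rewrite !subst_O_free, !lift_closed by auto. reflexivity. Qed.

Lemma tlist_abstract_O A : closed_ty A -> contains_O A = false ->
  tlist A = TAll (subst_O (TVar 0) (TArr O (TArr (TArr A (TArr O O)) O))).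
Proof. intros. unfold tlist. simpl. rewrite !subst_O_free, !lift_closed by auto. reflexivity. Qed.

Theorem theorem2p2p9 : forall A B : ty,
  input_type A -> input_type B ->
  contains_O A = false -> contains_O B = false ->
  input_type (tand A B) /\ input_type (tor A B) /\ input_type (tlist A).
Proof.
  intros A B HA HB HAO HBO.
  assert (HargA : arg_type A) by (right; auto).
  assert (HargB : arg_type B) by (right; auto).
  assert (HargO : arg_type O) by (left; reflexivity).
  destruct HA as [HAc _], HB as [HBc _].
  rewrite tand_abstract_O, tor_abstract_O, tlist_abstract_O by auto.
  split; [|split]; apply input_type_abstract_O; repeat (apply ends_arr || apply ends_O); auto.
Qed.
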